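(* For $\lambda>0$ and $k\in\{0,1,2,\ldots\}$ let $p_k(\lambda)=\frac{\lambda^k}{k!}e^{-\lambda}$, and let $(q_k(\lambda))_{k\ge0}$ be the sequence $(p_k(\lambda))_{k\ge0}$ rearranged in non-increasing order (equal terms are kept with their multiplicities). Then for each $n\ge0$ the function $S_n(\lambda)=\sum_{k=0}^n q_k(\lambda)$ is strictly decreasing on $(0,+\infty)$.
   Context: $p_k(\lambda)$ are the probabilities of the Poisson distribution with parameter $\lambda$. Since $p_k(\lambda)\to0$ as $k\to\infty$, the non-increasing rearrangement $(q_k(\lambda))_{k\ge0}$ is well defined: $q_0(\lambda)\ge q_1(\lambda)\ge\cdots$ and $(q_k(\lambda))$ is a permutation of $(p_k(\lambda))$. *)

From Stdlib Require Import Arith Reals Lra ClassicalEpsilon.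
Open Scope R_scope.

Definition poisson_p (lam : R) (k : nat) : R :=
  lam ^ k / INR (Factorial.fact k) * exp (- lam).

Definition is_noninc_rearrangement (p q : nat -> R) : Prop :=
  exists sigma : nat -> nat,
    (forall i j, sigma i = sigma j -> i = j) /\
    (forall m, exists k, sigma k = m) /\
    (forall k, q k = p (sigma k)) /\
    (forall k, q (S k) <= q k).

(* The non-increasing rearrangement (q_k(lambda))_k, chosen by Hilbert's
   epsilon; its values are uniquely determined whenever it exists. *)
Definition poisson_q (lam : R) : nat -> R :=
  epsilon (inhabits (fun _ : nat => 0))
          (fun q => is_noninc_rearrangement (poisson_p lam) q).

(* S_n(lambda) = q_0 + ... + q_n  (sum_f_R0 f n has n+1 terms). *)
Definition poisson_S (n : nat) (lam : R) : R :=
  sum_f_R0 (poisson_q lam) n.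

(* The sequence k |-> p_k(t) is unimodal, so merging its increasing and
   decreasing parts from the mode outwards lists it in non-increasing order,
   and every partial sum S_n(t) is a window sum
   W_m(t) = p_m(t) + ... + p_{m+n}(t); moreover S_n(t) is the largest window sum.
   From p_k' = p_{k-1} - p_k we get W_m' = p_{m-1} - p_{m+n}, and the ratio
   p_{m+n}/p_{m-1} is increasing in t: once window m is at least as heavy as
   window m-1, W_m is strictly decreasing from then on.  For x < y take an
   optimal window m at y.  Going down from y, W_m increases until windows m and
   m-1 tie; there window m-1 beats its own left neighbour, and induction on m
   yields a window sum at x, hence S_n(x), strictly above S_n(y). *)

From Stdlib Require Import Reals Lra Lia List FinFun Classical ClassicalEpsilon.
From Coquelicot Require Import Coquelicot.
Open Scope R_scope.

Definition sumR (l : list R) : R := fold_right Rplus 0 l.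

Lemma sumR_app l1 l2 : sumR (l1 ++ l2) = sumR l1 + sumR l2.
Proof. induction l1 as [|a l1 IH]; simpl; [lra|]. unfold sumR in *; simpl; rewrite IH; lra. Qed.

Lemma sumR_rcons l a : sumR (l ++ a :: nil) = sumR l + a.
Proof. rewrite sumR_app; unfold sumR; simpl; ring. Qed.

Lemma sum_f_R0_seq (f : nat -> R) n : sum_f_R0 f n = sumR (map f (seq 0 (S n))).
Proof.
  induction n as [|n IH]; [unfold sumR; simpl; ring|].
  rewrite seq_S, map_app; cbn [map]; now rewrite sumR_rcons, <- IH.
Qed.

Definition window (f : nat -> R) (m len : nat) : R := sumR (map f (seq m len)).

Lemma window_succ (f : nat -> R) m len :
  window f (S m) (S len) = window f m (S len) - f m + f (m + S len)%nat.
Proof.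
  unfold window; rewrite seq_S, map_app; cbn [map]; rewrite sumR_rcons.
  change (sumR (map f (seq m (S len)))) with (f m + sumR (map f (seq (S m) len))).
  replace (S m + len)%nat with (m + S len)%nat by lia; ring.
Qed.

Lemma is_derive_neg_decreasing (f f' : R -> R) a b : a < b ->
  (forall t, a <= t <= b -> is_derive f t (f' t)) ->
  (forall t, a < t < b -> f' t < 0) -> f b < f a.
Proof.
  intros ab df neg.
  destruct (MVT_cor2 f f' a b ab) as [c [E c_in]].
  - intros c c_in; apply is_derive_Reals, df, c_in.
  - pose proof (neg c c_in); nra.
Qed.

Section NonincreasingSequence.
Variable q : nat -> R.
Hypothesis q_noninc : forall k, q (S k) <= q k.

Lemma noninc_le a b : (a <= b)%nat -> q b <= q a.
Proof. induction 1 as [|b _ IH]; [lra|]. specialize (q_noninc b); lra. Qed.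

Lemma sum_distinct_le_prefix L l :
  NoDup l -> length l = L -> sumR (map q l) <= sumR (map q (seq 0 L)).
Proof.
  revert l; induction L as [|L IH]; intros l l_uniq l_size.
  - destruct l; [simpl; lra | discriminate].
  - assert (large : exists x, In x l /\ (L <= x)%nat).
    { apply NNPP; intro none.
      assert (sub : incl l (seq 0 L)).
      { intros x x_in; apply in_seq; split; [lia|].
        destruct (Nat.lt_ge_cases x L); auto; exfalso; eauto. }
      pose proof (NoDup_incl_length l_uniq sub); rewrite length_seq in *; lia. }
    destruct large as [x [x_in L_le_x]].
    destruct (in_split _ _ x_in) as [l1 [l2 ->]].
    rewrite length_app in l_size; simpl in l_size.
    pose proof (IH (l1 ++ l2) (NoDup_remove_1 _ _ _ l_uniq) ltac:(rewrite length_app; lia)).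
    rewrite !map_app, !sumR_app in *; rewrite seq_S, map_app; cbn [map]; rewrite sumR_rcons.
    pose proof (noninc_le _ _ L_le_x).
    rewrite Nat.add_0_l; change (sumR (q x :: map q l2)) with (q x + sumR (map q l2)); lra.
Qed.
End NonincreasingSequence.

Section Rearrangement.
Variables p q : nat -> R.
Hypothesis q_rearr : is_noninc_rearrangement p q.

Lemma rearrangement_sum_ge n l :
  NoDup l -> length l = S n -> sumR (map p l) <= sum_f_R0 q n.
Proof.
  destruct q_rearr as [s [s_inj [s_surj [q_def q_noninc]]]]; intros l_uniq l_size.
  assert (preimage : exists l', map s l' = l).
  { clear l_uniq l_size; induction l as [|a l [l' E]]; [now exists nil|].
    destruct (s_surj a) as [k Hk]; exists (k :: l'); simpl; congruence. }
  destruct preimage as [l' <-].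
  rewrite map_map, sum_f_R0_seq, (map_ext _ q) by (intros; symmetry; auto).
  apply sum_distinct_le_prefix; auto.
  - eapply NoDup_map_inv; eauto.
  - now rewrite length_map in l_size.
Qed.

Lemma rearrangement_sum_attained n :
  exists l, NoDup l /\ length l = S n /\ sum_f_R0 q n = sumR (map p l).
Proof.
  destruct q_rearr as [s [s_inj [_ [q_def _]]]].
  exists (map s (seq 0 (S n))); repeat split.
  - apply Injective_map_NoDup; [exact s_inj | apply seq_NoDup].
  - now rewrite length_map, length_seq.
  - rewrite sum_f_R0_seq, map_map; f_equal; apply map_ext; auto.
Qed.
End Rearrangement.

Lemma noninc_rearrangements_sum_eq (p q q' : nat -> R) n :
  is_noninc_rearrangement p q -> is_noninc_rearrangement p q' ->
  sum_f_R0 q n = sum_f_R0 q' n.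
Proof.
  intros rq rq'; apply Rle_antisym.
  - destruct (rearrangement_sum_attained _ _ rq n) as [l [? [? ->]]].
    now apply (rearrangement_sum_ge _ _ rq').
  - destruct (rearrangement_sum_attained _ _ rq' n) as [l [? [? ->]]].
    now apply (rearrangement_sum_ge _ _ rq).
Qed.

Section UnimodalMerge.
Variable p : nat -> R.
Variable M : nat.
Hypothesis p_incr : forall k, (k < M)%nat -> p k <= p (S k).
Hypothesis p_decr : forall k, (M < k)%nat -> p (S k) <= p k.
Hypothesis p_tail : exists N, forall k, (N <= k)%nat -> p k < p 0.

(* A state [(c, r)] means that the indices of [[c, r)] have been listed; the
   next one is [c - 1] or [r], whichever carries the larger value. *)
Definition next_index (s : nat * nat) : nat :=
  match s with
  | (O, r) => r
  | (S c, r) => if Rle_dec (p r) (p c) then c else r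
  end.

Definition merge_step (s : nat * nat) : nat * nat :=
  match s with
  | (O, r) => (O, S r)
  | (S c, r) => if Rle_dec (p r) (p c) then (c, r) else (S c, S r)
  end.

Fixpoint merge_state (m : nat) : nat * nat :=
  match m with O => (S M, S M) | S m => merge_step (merge_state m) end.

Definition merge_index (m : nat) : nat := next_index (merge_state m).

Lemma merge_step_cases c r :
  (c <> O /\ merge_step (c, r) = (pred c, r) /\ next_index (c, r) = pred c) \/
  (merge_step (c, r) = (c, S r) /\ next_index (c, r) = r).
Proof. destruct c as [|c]; simpl; [|destruct Rle_dec]; auto. Qed.

Lemma merge_state_bounds m :
  let (c, r) := merge_state m in (c <= S M <= r /\ r = c + m)%nat.
Proof.
  induction m as [|m IH]; simpl; [lia|].
  destruct (merge_state m) as [c r].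
  destruct (merge_step_cases c r) as [[? [-> _]] | [-> _]]; lia.
Qed.

Lemma merge_state_mono i j : (i <= j)%nat ->
  (fst (merge_state j) <= fst (merge_state i) /\ snd (merge_state i) <= snd (merge_state j))%nat.
Proof.
  induction 1 as [|j _ IH]; [lia|]. simpl.
  destruct (merge_state j) as [c r]; simpl in IH.
  destruct (merge_step_cases c r) as [[? [-> _]] | [-> _]]; simpl; lia.
Qed.

Lemma merge_index_new m :
  let (c, r) := merge_state m in
  let (c', r') := merge_state (S m) in
  ~ (c <= merge_index m < r)%nat /\ (c' <= merge_index m < r')%nat.
Proof.
  unfold merge_index; simpl. pose proof (merge_state_bounds m). destruct (merge_state m) as [c r].
  destruct (merge_step_cases c r) as [[? [-> ->]] | [-> ->]]; simpl; lia.
Qed.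

Lemma merge_index_inj : Injective merge_index.
Proof.
  assert (distinct : forall a b, (a < b)%nat -> merge_index a <> merge_index b).
  { intros a b ab E. pose proof (merge_index_new a) as Na. pose proof (merge_index_new b) as Nb.
    pose proof (merge_state_mono (S a) b ab).
    destruct (merge_state a), (merge_state (S a)), (merge_state b), (merge_state (S b)).
    simpl in *; rewrite E in Na; destruct Na, Nb; lia. }
  intros i j E; destruct (Nat.lt_total i j) as [ij | [-> | ji]]; auto;
    exfalso; [apply (distinct i j) | apply (distinct j i)]; auto.
Qed.

Lemma merge_index_covers m v :
  (fst (merge_state m) <= v < snd (merge_state m))%nat -> exists k, merge_index k = v.
Proof.
  induction m as [|m IH]; simpl; [lia|]; intros v_in.
  destruct (classic (fst (merge_state m) <= v < snd (merge_state m))%nat) as [old | new];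
    [now apply IH|].
  exists m; unfold merge_index. pose proof (merge_state_bounds m).
  destruct (merge_state m) as [c r].
  destruct (merge_step_cases c r) as [[? [E ->]] | [E ->]]; rewrite E in v_in; simpl in *; lia.
Qed.

Lemma merge_index_surj m : exists k, merge_index k = m.
Proof.
  destruct p_tail as [N tail].
  assert (low_incr : forall k, (k <= M)%nat -> p 0 <= p k).
  { induction k as [|k IH]; intros; [lra|].
    pose proof (p_incr k ltac:(lia)); pose proof (IH ltac:(lia)); lra. }
  set (B := Nat.max N (S M)).
  assert (right_bounded : forall j, fst (merge_state j) = O \/ (snd (merge_state j) <= B)%nat).
  { induction j as [|j IH]; simpl; [right; unfold B; lia|].
    pose proof (merge_state_bounds j).
    destruct (merge_state j) as [[|c] r]; simpl in *; [now left|].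
    destruct Rle_dec as [_ | right_larger]; simpl; [right; lia|].
    destruct IH as [? | r_le]; [lia|right].
    destruct (Nat.eq_dec r B) as [-> | ?]; [|lia].
    exfalso; apply right_larger.
    pose proof (tail B ltac:(unfold B; lia)); pose proof (low_incr c ltac:(lia)); lra. }
  apply (merge_index_covers (B + m + 1)%nat).
  pose proof (merge_state_bounds (B + m + 1)%nat); destruct (right_bounded (B + m + 1)%nat).
  all: destruct (merge_state (B + m + 1)%nat); simpl in *; lia.
Qed.

Lemma merge_index_noninc k : p (merge_index (S k)) <= p (merge_index k).
Proof.
  unfold merge_index; simpl. pose proof (merge_state_bounds k).
  destruct (merge_state k) as [[|[|c]] r]; simpl in *;
    repeat (destruct Rle_dec; simpl); first [lra | apply p_decr; lia | apply p_incr; lia].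
Qed.

Lemma merge_prefix_window m :
  sumR (map (fun k => p (merge_index k)) (seq 0 m)) = window p (fst (merge_state m)) m.
Proof.
  unfold window; induction m as [|m IH]; [reflexivity|].
  rewrite seq_S, map_app; cbn [map]; rewrite sumR_rcons, IH, Nat.add_0_l.
  unfold merge_index; cbn [merge_state]; pose proof (merge_state_bounds m).
  destruct (merge_state m) as [c r].
  destruct (merge_step_cases c r) as [[? [-> ->]] | [-> ->]]; simpl fst.
  - destruct c as [|c]; [lia|]; simpl; ring.
  - rewrite seq_S, map_app; cbn [map]; rewrite sumR_rcons. do 2 f_equal; lia.
Qed.

Lemma unimodal_window_rearrangement : exists q,
  is_noninc_rearrangement p q /\ forall n, exists c, sum_f_R0 q n = window p c (S n).
Proof.
  exists (fun k => p (merge_index k)); split.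
  - exists merge_index; repeat split.
    + exact merge_index_inj.
    + exact merge_index_surj.
    + exact merge_index_noninc.
  - intros n; exists (fst (merge_state (S n))).
    now rewrite sum_f_R0_seq, merge_prefix_window.
Qed.
End UnimodalMerge.

Lemma poisson_p_pos t k : 0 < t -> 0 < poisson_p t k.
Proof.
  intros. unfold poisson_p. apply Rmult_lt_0_compat; [|apply exp_pos].
  apply Rdiv_lt_0_compat; [now apply pow_lt | apply INR_fact_lt_0].
Qed.

Lemma poisson_p_succ t k : poisson_p t (S k) = poisson_p t k * t / INR (S k).
Proof.
  unfold poisson_p. rewrite fact_simpl, mult_INR; simpl pow.
  pose proof (INR_fact_neq_0 k); pose proof (lt_0_INR (S k) ltac:(lia)). field; lra.
Qed.

Lemma poisson_p_add t j d : poisson_p t (j + d) =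
  poisson_p t j * (t ^ d * (INR (Factorial.fact j) / INR (Factorial.fact (j + d)))).
Proof.
  unfold poisson_p. rewrite pow_add.
  pose proof (INR_fact_neq_0 j); pose proof (INR_fact_neq_0 (j + d)). field; auto.
Qed.

Lemma poisson_p_unimodal t : 0 < t -> exists M,
  (forall k, (k < M)%nat -> poisson_p t k <= poisson_p t (S k)) /\
  (forall k, (M < k)%nat -> poisson_p t (S k) <= poisson_p t k).
Proof.
  intros t_pos; destruct (nfloor_ex t ltac:(lra)) as [M [M_le t_lt]].
  exists M; split; intros k Hk; rewrite poisson_p_succ;
    pose proof (poisson_p_pos t k t_pos); pose proof (lt_0_INR (S k) ltac:(lia)).
  - assert (INR (S k) <= INR M) by (apply le_INR; lia).
    apply Rmult_le_reg_r with (INR (S k)); auto. field_simplify; nra.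
  - assert (INR M + 1 <= INR (S k)) by (rewrite <- S_INR; apply le_INR; lia).
    apply Rmult_le_reg_r with (INR (S k)); auto. field_simplify; nra.
Qed.

Lemma poisson_p_tail t : exists N, forall k, (N <= k)%nat -> poisson_p t k < poisson_p t 0.
Proof.
  destruct (cv_speed_pow_fact t 1 ltac:(lra)) as [N HN]; exists N; intros k Hk.
  specialize (HN k Hk); unfold Rdist in HN; rewrite Rminus_0_r in HN.
  apply Rabs_def2 in HN; pose proof (exp_pos (- t)).
  unfold poisson_p; simpl; rewrite Rdiv_1_r, Rmult_1_l. nra.
Qed.

Lemma poisson_q_rearrangement t : 0 < t ->
  is_noninc_rearrangement (poisson_p t) (poisson_q t).
Proof.
  intros t_pos; destruct (poisson_p_unimodal t t_pos) as [M [incr decr]].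
  destruct (unimodal_window_rearrangement _ M incr decr (poisson_p_tail t)) as [q [q_rearr _]].
  unfold poisson_q; apply epsilon_spec; eauto.
Qed.

Definition poisson_window (n m : nat) (t : R) : R := window (poisson_p t) m (S n).

Lemma poisson_S_ge_window n m t : 0 < t -> poisson_window n m t <= poisson_S n t.
Proof.
  intros t_pos; unfold poisson_window.
  apply (rearrangement_sum_ge _ _ (poisson_q_rearrangement t t_pos)).
  - apply seq_NoDup.
  - apply length_seq.
Qed.

Lemma poisson_S_eq_window n t : 0 < t -> exists c, poisson_S n t = poisson_window n c t.
Proof.
  intros t_pos; destruct (poisson_p_unimodal t t_pos) as [M [incr decr]].
  destruct (unimodal_window_rearrangement _ M incr decr (poisson_p_tail t)) as [q [q_rearr windows]].
  destruct (windows n) as [c Ec]; exists c; unfold poisson_window; rewrite <- Ec.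
  apply (noninc_rearrangements_sum_eq (poisson_p t)); auto using poisson_q_rearrangement.
Qed.

Definition poisson_p_prev (k : nat) (t : R) : R :=
  match k with O => 0 | S j => poisson_p t j end.

Lemma is_derive_poisson_p k t :
  is_derive (fun t => poisson_p t k) t (poisson_p_prev k t - poisson_p t k).
Proof.
  unfold poisson_p_prev, poisson_p; destruct k as [|j].
  - simpl; auto_derive; auto; field.
  - auto_derive; auto.
    change (match j with 0%nat => 1 | S _ => INR j + 1 end) with (INR (S j)).
    change (Factorial.fact j + j * Factorial.fact j)%nat with (Factorial.fact (S j)).
    rewrite fact_simpl, mult_INR; simpl pow.
    pose proof (INR_fact_neq_0 j); pose proof (lt_0_INR (S j) ltac:(lia)).
    field; lra.
Qed.

Lemma is_derive_poisson_window m len t :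
  is_derive (fun t => window (poisson_p t) m len) t
            (poisson_p_prev m t - poisson_p_prev (m + len) t).
Proof.
  revert m; induction len as [|len IH]; intros m; unfold window; simpl.
  - rewrite Nat.add_0_r, Rminus_diag; auto_derive; auto.
  - replace (poisson_p_prev m t - poisson_p_prev (m + S len) t) with
      ((poisson_p_prev m t - poisson_p t m) + (poisson_p_prev (S m) t - poisson_p_prev (S m + len) t))
      by (rewrite Nat.add_succ_r; simpl; ring).
    apply (is_derive_plus (fun t => poisson_p t m)); [apply is_derive_poisson_p | apply IH].
Qed.

Lemma poisson_p_shift_le_strict j d a t : 0 < a -> a < t ->
  poisson_p a j <= poisson_p a (j + S d) -> poisson_p t j < poisson_p t (j + S d).
Proof.
  intros a_pos a_lt_t; rewrite !poisson_p_add.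
  set (K := INR (Factorial.fact j) / INR (Factorial.fact (j + S d))).
  assert (0 < K) by (apply Rdiv_lt_0_compat; apply INR_fact_lt_0).
  pose proof (poisson_p_pos a j a_pos); pose proof (poisson_p_pos t j ltac:(lra)).
  assert (pow_lt : a ^ S d < t ^ S d).
  { assert (a ^ d <= t ^ d) by (apply pow_incr; lra).
    pose proof (pow_lt a d a_pos); simpl; nra. }
  intros le_a; assert (1 <= a ^ S d * K) by (apply Rmult_le_reg_l with (poisson_p a j); lra).
  assert (1 < t ^ S d * K) by nra. nra.
Qed.

Lemma poisson_p_shift_le_pred j d t : 0 < t ->
  poisson_p t (S j) <= poisson_p t (S j + d) -> poisson_p t j <= poisson_p t (j + d).
Proof.
  intros t_pos; replace (S j + d)%nat with (S (j + d)) by lia; rewrite !poisson_p_succ.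
  set (A := poisson_p t j); set (B := poisson_p t (j + d)); intros le_succ.
  destruct (Rle_lt_dec A B) as [| B_lt_A]; auto; exfalso.
  assert (0 < B) by now apply poisson_p_pos. pose proof (lt_0_INR (S j) ltac:(lia)).
  assert (B * t / INR (S (j + d)) <= B * t / INR (S j)).
  { apply Rmult_le_compat_l; [nra|]. apply Rinv_le_contravar; [lra|]. apply le_INR; lia. }
  assert (B * t / INR (S j) < A * t / INR (S j)).
  { apply Rmult_lt_compat_r; [apply Rinv_0_lt_compat; lra | nra]. }
  lra.
Qed.

Lemma poisson_p_crossing j d x y : x < y ->
  poisson_p x (j + d) < poisson_p x j -> poisson_p y j <= poisson_p y (j + d) ->
  exists z, x < z <= y /\ poisson_p z j = poisson_p z (j + d).
Proof.
  intros xy gt_x le_y.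
  set (f t := poisson_p t j - poisson_p t (j + d)).
  assert (f_cont : continuity f).
  { intros t; apply derivable_continuous_pt.
    eexists; apply is_derive_Reals.
    apply (is_derive_minus (fun t => poisson_p t j) (fun t => poisson_p t (j + d)));
      apply is_derive_poisson_p. }
  destruct (IVT_gen f x y 0 f_cont) as [z [z_in fz]].
  - unfold f, Rmin, Rmax in *; repeat destruct Rle_dec; lra.
  - rewrite Rmin_left, Rmax_right in z_in by lra.
    exists z; unfold f in *; split; [|lra].
    destruct (Req_dec z x) as [-> | ]; lra.
Qed.

(* [p_{m-1} t <= p_{m+n} t], i.e. window [m] weighs at least as much as window
   [m-1]; it is also the sign condition [W_m' t <= 0]. *)
Definition beats_left_neighbour (n m : nat) (t : R) : Prop :=
  match m with O => True | S j => poisson_p t j <= poisson_p t (j + S n) end.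

Lemma poisson_window_decreasing n m a b : 0 < a -> a < b ->
  beats_left_neighbour n m a -> poisson_window n m b < poisson_window n m a.
Proof.
  intros a_pos ab beats; unfold poisson_window.
  apply (is_derive_neg_decreasing (fun t => window (poisson_p t) m (S n))
    (fun t => poisson_p_prev m t - poisson_p_prev (m + S n) t) a b ab);
    [intros; apply is_derive_poisson_window|].
  intros t t_in; destruct m as [|j]; simpl.
  - pose proof (poisson_p_pos t n ltac:(lra)); lra.
  - pose proof (poisson_p_shift_le_strict j n a t a_pos ltac:(lra) beats); lra.
Qed.

Lemma poisson_window_descent n m : forall x y, 0 < x -> x < y ->
  beats_left_neighbour n m y -> exists j, poisson_window n m y < poisson_window n j x.
Proof.
  induction m as [|j IH]; intros x y x_pos xy beats_y.
  - exists O; now apply poisson_window_decreasing.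
  - destruct (Rle_lt_dec (poisson_p x j) (poisson_p x (j + S n))) as [beats_x | loses_x].
    + exists (S j); now apply poisson_window_decreasing.
    + destruct (poisson_p_crossing j (S n) x y xy loses_x beats_y) as [z [[xz zy] tie]].
      assert (y_le_z : poisson_window n (S j) y <= poisson_window n (S j) z).
      { destruct (Req_dec z y) as [-> | ]; [lra|].
        left; apply poisson_window_decreasing; simpl; lra. }
      assert (shift : poisson_window n (S j) z = poisson_window n j z).
      { unfold poisson_window; rewrite window_succ; lra. }
      assert (beats_z : beats_left_neighbour n j z).
      { destruct j as [|i]; simpl; auto.
        apply poisson_p_shift_le_pred; [lra|]. rewrite tie; lra. }
      destruct (IH x z x_pos xz beats_z) as [j' lt]; exists j'; lra.
Qed.

Theorem lemma1 : forall (n : nat) (x y : R),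
  0 < x -> x < y -> poisson_S n y < poisson_S n x.
Proof.
  intros n x y x_pos xy.
  destruct (poisson_S_eq_window n y ltac:(lra)) as [c S_y].
  assert (beats_y : beats_left_neighbour n c y).
  { destruct c as [|j]; simpl; auto.
    pose proof (poisson_S_ge_window n j y ltac:(lra)).
    rewrite S_y in *; unfold poisson_window in *; rewrite window_succ in *; lra. }
  destruct (poisson_window_descent n c x y x_pos xy beats_y) as [j lt].
  pose proof (poisson_S_ge_window n j x x_pos); lra.
Qed.
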